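(* Let $\mathcal{G}$ be the information-flow graph of a single-sender single-uniprior index-coding instance with message lengths $q_1,\dots,q_n$. Then \[ \ell^*(\mathcal{G}) \geq \sum_{i:\ i \text{ is a predecessor of some vertex in } \mathcal{L}(\mathcal{G})} q_i . \]
   Context: Single-sender single-uniprior index coding: there are $n$ receivers and $n$ independent messages $x_1,\dots,x_n$; message $x_i$ consists of $q_i\ge 1$ bits, each independently uniformly distributed on $\{0,1\}$. A single sender knows all messages. Receiver $i$ knows $x_i$ a priori and requests a set $\mathcal{W}_i$ of messages with $x_i\notin\mathcal{W}_i$. The information-flow graph is the directed graph $\mathcal{G}=(\mathcal{V},\mathcal{A})$ with $\mathcal{V}=\{1,\dots,n\}$ and an arc $(j\to i)\in\mathcal{A}$ iff $x_j\in\mathcal{W}_i$. An index code of length $\ell$ consists of an encoding function $E:\{0,1\}^{\sum_i q_i}\to\{0,1\}^\ell$ and, for each receiver $i$, a decoding function $D_i$ such that $D_i(E(x_1,\dots,x_n),x_i)$ equals the tuple of messages in $\mathcal{W}_i$ for all values of the messages. $\ell^*(\mathcal{G})$ denotes the minimum length of an index code. A leaf vertex is a vertex with no outgoing arcs; $\mathcal{L}(\mathcal{G})$ is the set of leaf vertices. A vertex $j$ is a predecessor of vertex $i$ iff there is a directed path in $\mathcal{G}$ from $j$ to $i$. *)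

From mathcomp Require Import all_boot.
From mathcomp Require Import boolp.
Set Implicit Arguments. Unset Strict Implicit. Unset Printing Implicit Defensive.

Section IndexCoding.
Variables (n : nat) (q : 'I_n -> nat) (W : 'I_n -> {set 'I_n}).

Definition msgs := {dffun forall i : 'I_n, (q i).-tuple bool}.

Definition ifg : rel 'I_n := fun j i => j \in W i.

(* Index code of length l: encoding E and decoders D_i; D_i outputs a
   candidate value for every message, only those in W_i must be correct. *)
Definition is_index_code (l : nat) (E : msgs -> l.-tuple bool)
  (D : forall i : 'I_n, l.-tuple bool -> (q i).-tuple bool ->
         forall j : 'I_n, (q j).-tuple bool) : Prop :=
  forall (x : msgs) (i j : 'I_n), j \in W i -> D i (E x) (x i) j = x j.

Definition has_index_code (l : nat) : Prop :=
  exists E D, @is_index_code l E D.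

Definition msgs0 : msgs := [ffun i => [tuple of nseq (q i) false]].

Lemma has_index_code_exists : exists l, `[< has_index_code l >].
Proof.
exists #|{: msgs}|; apply/asboolP.
exists (fun x => mktuple (fun k : 'I_#|{: msgs}| => k == enum_rank x)).
exists (fun i y _ j =>
  (match [pick k | tnth y k] with Some k => enum_val k | None => msgs0 end) j).
move=> x i j _.
case: pickP => [k|/(_ (enum_rank x))]; rewrite tnth_mktuple ?eqxx //.
by move/eqP=> ->; rewrite enum_rankK.
Qed.

Definition ell_star : nat := ex_minn has_index_code_exists.

Definition predecessor (j i : 'I_n) : bool :=
  [exists k, ifg j k && connect ifg k i].

Definition leaf (i : 'I_n) : bool := [forall k, ~~ ifg i k].

End IndexCoding.

(* Fix every message outside the set A of predecessors of leaves, say to zero.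
   If two message vectors of this kind have the same codeword, they agree at
   every leaf (a leaf is never a predecessor), and agreement propagates
   backwards along arcs: receiver k decodes x_j for every arc j -> k from the
   codeword and its own x_k.  Hence the encoder is injective on the
   2^(sum_{i in A} q_i) such vectors, and the codeword needs that many bits. *)
From mathcomp Require Import all_boot.
From mathcomp Require Import boolp.

Set Implicit Arguments.
Unset Strict Implicit.
Unset Printing Implicit Defensive.

Section IndexCodeLowerBound.
Variables (n : nat) (q : 'I_n -> nat) (W : 'I_n -> {set 'I_n}).

Definition msgs_fixed_outside (A : {pred 'I_n}) : pred (msgs q) :=
  family (fun i => if i \in A then predT else pred1 (msgs0 q i)).

Lemma card_msgs_fixed_outside (A : {pred 'I_n}) :
  #|msgs_fixed_outside A| = 2 ^ (\sum_(i < n | i \in A) q i).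
Proof.
rewrite card_family expn_sum big_mkcond /= foldrE big_map big_enum /=.
apply: eq_bigr => i _; case: (i \in A) => /=.
  by rewrite card_tuple card_bool.
by rewrite card1.
Qed.

Lemma leaf_not_predecessor (v u : 'I_n) : leaf W v -> ~~ predecessor W v u.
Proof.
move/forallP=> Lv; apply/existsP => -[k /andP [vk _]].
by move: (Lv k); rewrite vk.
Qed.

Section Decoding.
Variables (l : nat) (E : msgs q -> l.-tuple bool).
Variable D : forall i : 'I_n, l.-tuple bool -> (q i).-tuple bool ->
  forall j : 'I_n, (q j).-tuple bool.
Hypothesis code : is_index_code W E D.

Lemma index_code_agree_connect (x x' : msgs q) (k v : 'I_n) :
  E x = E x' -> x v = x' v -> connect (ifg W) k v -> x k = x' k.
Proof.
move=> Exx' xv /connectP [p kp Ev]; subst v.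
elim: p k kp xv => [|y p IHp] k //= /andP [ky yp] xv.
by rewrite -(code x ky) -(code x' ky) Exx' (IHp y yp xv).
Qed.

Lemma index_code_inj_fixed_outside (A : {pred 'I_n}) :
  (forall i, i \in A -> exists2 v, v \notin A & connect (ifg W) i v) ->
  {in msgs_fixed_outside A &, injective E}.
Proof.
move=> reachA x x' /familyP xA /familyP x'A Exx'.
have agree_out j : j \notin A -> x j = x' j.
  by move=> /negbTE jA; move: (xA j) (x'A j); rewrite jA => /eqP -> /eqP ->.
apply/ffunP => i; have [iA | /agree_out //] := boolP (i \in A).
have [v vA iv] := reachA i iA.
exact: index_code_agree_connect Exx' (agree_out v vA) iv.
Qed.

Lemma index_code_length_ge (A : {pred 'I_n}) :
  (forall i, i \in A -> exists2 v, v \notin A & connect (ifg W) i v) ->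
  \sum_(i < n | i \in A) q i <= l.
Proof.
move=> reachA; have := @leq_card_in _ _ E _ (index_code_inj_fixed_outside reachA).
by rewrite card_msgs_fixed_outside card_tuple card_bool leq_exp2l.
Qed.

End Decoding.

Lemma leaf_predecessors_reach_outside (i : 'I_n) :
  let A := [pred j | [exists v, leaf W v && predecessor W j v]] in
  i \in A -> exists2 v, v \notin A & connect (ifg W) i v.
Proof.
move=> A /existsP [v /andP [Lv /existsP [k /andP [ik kv]]]].
exists v; last by apply: connect_trans kv; apply: connect1.
apply/existsP => -[u /andP [Lu]]; exact/negP/leaf_not_predecessor.
Qed.

End IndexCodeLowerBound.

Theorem lemma3 (n : nat) (q : 'I_n -> nat) (W : 'I_n -> {set 'I_n})
  (hq : forall i, 0 < q i) (hW : forall i, i \notin W i) :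
  \sum_(i < n | [exists v, leaf W v && predecessor W i v]) q i
    <= ell_star q W.
Proof.
rewrite /ell_star; case: ex_minnP => l /asboolP [E [D code]] _.
exact: (index_code_length_ge code (@leaf_predecessors_reach_outside n W)).
Qed.
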